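(* Consider the translation and rotation invariant model described in the context, fix $\beta>0$, and let $\widehat{B}:(-\pi,\pi]^d\to(0,+\infty]$ be a continuous function such that (i) $\int_{(-\pi,\pi]^d}\widehat{B}(p)\,dp<\infty$ and (ii) $\widehat{D}^\Lambda_p\le\widehat{B}(p)$ for all $p\in\Lambda_*\setminus\{0\}$ and all boxes $\Lambda$. For a box $\Lambda$ and $\ell,\ell'\in\Lambda$ put $B^\Lambda_{\ell\ell'}=|\Lambda|^{-1}\sum_{p\in\Lambda_*\setminus\{0\}}\widehat{B}(p)\cos(p,\ell-\ell')$. Then for every box $\Lambda$ and all $\ell,\ell'\in\Lambda$, $$D^\Lambda_{\ell\ell'}\ge\big(D^\Lambda_{\ell\ell}-B^\Lambda_{\ell\ell}\big)+B^\Lambda_{\ell\ell'}.$$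
   Context: Model. $d,\nu\ge1$, $m>0$, $a>0$. Interaction: $J_{\ell\ell'}=\phi(|\ell_1-\ell'_1|,\dots,|\ell_d-\ell'_d|)$ with $\phi:\mathbb{N}_0^d\to[0,\infty)$, $\phi(0)=0$, $\sum_{\ell'}J_{\ell\ell'}<\infty$. Anharmonic potential $V:\mathbb{R}^\nu\to\mathbb{R}$, the same at all sites, continuous, with $V(Ux)=V(x)$ for all $U\in O(\nu)$ and $V(x)\ge A_V|x|^{2r}+B_V$ ($r>1$, $A_V>0$). $C_\beta$: continuous $\omega:[0,\beta]\to\mathbb{R}^\nu$ with $\omega(0)=\omega(\beta)$; $L^2_\beta=L^2([0,\beta]\to\mathbb{R}^\nu)$. $\chi$: centered Gaussian measure on $C_\beta$ with covariance $A^{-1}$, $A=(-m\frac{d^2}{d\tau^2}+a)\otimes\mathbf{I}$ with periodic boundary conditions; $\chi_\Lambda=\bigotimes_{\ell\in\Lambda}\chi$. Boxes: $\Lambda=\Lambda_L=(-L,L]^d\cap\mathbb{Z}^d$, regarded as a discrete torus of side $2L$; $J^\Lambda_{\ell\ell'}=\phi$ evaluated at the coordinatewise torus distances of $\ell,\ell'$. Periodic measure: $\nu^{\rm per}_\Lambda(d\omega_\Lambda)\propto\exp\big[\frac12\sum_{\ell,\ell'\in\Lambda}J^\Lambda_{\ell\ell'}(\omega_\ell,\omega_{\ell'})_{L^2_\beta}-\sum_{\ell\in\Lambda}\int_0^\beta V(\omega_\ell(\tau))d\tau\big]\chi_\Lambda(d\omega_\Lambda)$ (normalized to a probability). $D^\Lambda_{\ell\ell'}=\beta\int_0^\beta\langle(\omega_\ell(\tau),\omega_{\ell'}(\tau'))\rangle_{\nu^{\rm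 per}_\Lambda}d\tau'$ (independent of $\tau$). $\Lambda_*=\{p\in\mathbb{R}^d:p_j=-\pi+\frac{\pi}{L}s_j,\ s_j=1,\dots,2L\}$ and $\widehat{D}^\Lambda_p=\sum_{\ell'\in\Lambda}D^\Lambda_{\ell\ell'}e^{i(p,\ell'-\ell)}$ (independent of $\ell$). *)

From HB Require Import structures.
From mathcomp Require Import all_boot all_order all_algebra.
From mathcomp Require Import all_classical all_reals all_analysis.
Set Implicit Arguments. Unset Strict Implicit. Unset Printing Implicit Defensive.
Import Order.TTheory GRing.Theory Num.Theory numFieldNormedType.Exports.
Local Open Scope classical_set_scope.
Local Open Scope ring_scope.

Section Defs.
Variable R : realType.

(* Sites of the box Lambda_L = (-L,L]^d, a discrete torus of side 2L:
   the site with index k : 'I_d -> 'I_(2L) has coordinates k_j - L + 1.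
   Only coordinate differences are ever used below, so the shift is immaterial. *)
Definition site (d L : nat) := {ffun 'I_d -> 'I_(2 * L)%N}.

Definition tdist (L : nat) (a b : nat) : nat :=
  let del := if (a <= b)%N then (b - a)%N else (a - b)%N in minn del (2 * L - del)%N.

Definition JL (d L : nat) (phi : {ffun 'I_d -> nat} -> R) (l l' : site d L) : R :=
  phi [ffun j => tdist L (l j) (l' j)].

Definition dotv (nu : nat) (x y : 'rV[R]_nu) : R := \sum_(i < nu) x 0 i * y 0 i.

Definition int0b (beta : R) (f : R -> R) : R :=
  Rintegral (@lebesgue_measure R) `[0, beta] f.

Definition L2ip (nu : nat) (beta : R) (w w' : R -> 'rV[R]_nu) : R :=
  int0b beta (fun t => dotv (w t) (w' t)).

Definition Ex (dO : measure_display) (O : measurableType dO) (P : probability O R)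
  (F : O -> R) : R := fine (\int[P]_w (F w)%:E).

Definition C2per (beta : R) (h : R -> R) : Prop :=
  (forall t, h (t + beta) = h t) /\ (forall t, derivable h t 1) /\
  (forall t, derivable (derive1 h) t 1) /\ continuous (derive1 (derive1 h)).

Definition Aop (m a : R) (h : R -> R) : R -> R :=
  fun t => - m * derive1 (derive1 h) t + a * h t.

(* X (a process with paths indexed by the sites of Lambda_L) has law
   chi_Lambda = product of centered Gaussian measures on C_beta with covariance
   A^{-1}: its characteristic functional is E[exp(i <f,X>)] = exp(-1/2 <f, A^{-1} f>),
   stated for f = A h, h ranging over beta-periodic C^2 functions (A maps these onto
   the continuous periodic functions). *)
Definition is_chi_process (d nu L : nat) (beta m a : R)
  (dO : measure_display) (O : measurableType dO) (P : probability O R)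
  (X : O -> site d L -> R -> 'rV[R]_nu) : Prop :=
  (forall l t (i : 'I_nu), measurable_fun setT (fun w => X w l t 0 i)) /\
  (forall w l, {within `[0, beta], continuous (X w l)} /\ X w l 0 = X w l beta) /\
  (forall h : site d L -> 'I_nu -> R -> R,
     (forall l i, C2per beta (h l i)) ->
     let S := fun w => \sum_(l : site d L) \sum_(i < nu)
                 int0b beta (fun t => Aop m a (h l i) t * X w l t 0 i) in
     let q := \sum_(l : site d L) \sum_(i < nu)
                 int0b beta (fun t => Aop m a (h l i) t * h l i t) in
     Ex P (fun w => cos (S w)) = expR (- (q / 2)) /\ Ex P (fun w => sin (S w)) = 0).

(* the (unnormalized) periodic Gibbs density w.r.t. chi_Lambda *)
Definition gibbsW (d nu L : nat) (beta : R) (phi : {ffun 'I_d -> nat} -> R)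
  (V : 'rV[R]_nu -> R) (w : site d L -> R -> 'rV[R]_nu) : R :=
  expR (2^-1 * (\sum_(l : site d L) \sum_(l' : site d L) JL phi l l' * L2ip beta (w l) (w l'))
        - \sum_(l : site d L) int0b beta (fun t => V (w l t))).

Definition avg_per (d nu L : nat) (beta : R) (phi : {ffun 'I_d -> nat} -> R)
  (V : 'rV[R]_nu -> R) (dO : measure_display) (O : measurableType dO) (P : probability O R)
  (X : O -> site d L -> R -> 'rV[R]_nu) (F : O -> R) : R :=
  Ex P (fun w => F w * gibbsW beta phi V (X w)) / Ex P (fun w => gibbsW beta phi V (X w)).

(* D^Lambda_{l l'} (taken at tau = 0; it is independent of tau) *)
Definition DL (d nu L : nat) (beta : R) (phi : {ffun 'I_d -> nat} -> R)
  (V : 'rV[R]_nu -> R) (dO : measure_display) (O : measurableType dO) (P : probability O R)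
  (X : O -> site d L -> R -> 'rV[R]_nu) (l l' : site d L) : R :=
  beta * int0b beta (fun t' => avg_per beta phi V P X (fun w => dotv (X w l 0) (X w l' t'))).

(* momentum p in Lambda_*: p_j = -pi + (pi/L) s_j with s_j = k_j + 1 in {1..2L} *)
Definition pvec (d L : nat) (k : site d L) : 'rV[R]_d :=
  \row_j (- pi + pi / L%:R * (k j).+1%:R).

Definition pdot (d L : nat) (p : 'rV[R]_d) (l l' : site d L) : R :=
  \sum_(j < d) p 0 j * ((l' j)%:R - (l j)%:R).

(* real and imaginary parts of hat D^Lambda_p = sum_l' D_{l l'} e^{i(p, l'-l)} *)
Definition DhatRe (d L : nat) (D : site d L -> site d L -> R) (p : 'rV[R]_d) (l : site d L) : R :=
  \sum_(l' : site d L) D l l' * cos (pdot p l l').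
Definition DhatIm (d L : nat) (D : site d L -> site d L -> R) (p : 'rV[R]_d) (l : site d L) : R :=
  \sum_(l' : site d L) D l l' * sin (pdot p l l').

Definition BL (d L : nat) (Bh : 'rV[R]_d -> \bar R) (l l' : site d L) : \bar R :=
  (((2 * L)%:R ^+ d)^-1)%:E *
  (\sum_(k : site d L | pvec k != 0%R) (Bh (pvec k) * (cos (pdot (pvec k) l' l))%:E))%E.

(* iterated Lebesgue integral over (-pi,pi]^n (Tonelli: equals the integral over
   the cube for nonnegative Borel functions) *)
Fixpoint cube_int (n : nat) (g : (nat -> R) -> \bar R) : \bar R :=
  match n with
  | 0 => g (fun _ => 0)
  | n'.+1 => (\int[@lebesgue_measure R]_(x in [set` `]- pi, pi]%R])
               cube_int n' (fun q => g (fun k => if k == n' then x else q k)))%E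
  end.

Definition cube (d : nat) : set 'rV[R]_d := [set p | forall j, - pi < p 0 j <= pi].

End Defs.


(* The characters k |-> e^{i(p_k, l' - l)} of the discrete torus are orthogonal, so
   D is recovered from hat D by Fourier inversion. As hat D is real,
   |Lambda| (D_{ll} - D_{ll'}) = sum_{p <> 0} hat D_p (1 - cos (p, l' - l)), the term
   p = 0 vanishing. The weights 1 - cos are nonnegative, so bounding hat D_p by
   hat B(p) gives |Lambda| (B_{ll} - B_{ll'}). If hat B is infinite at some momentum
   then B_{ll} = +oo and there is nothing to prove. Only hypothesis (ii) and the
   positivity of hat B are used. *)

From HB Require Import structures.
From mathcomp Require Import all_boot all_order all_algebra.
From mathcomp Require Import all_classical all_reals all_analysis.
From mathcomp Require Import complex ring lra.
Import Order.TTheory GRing.Theory Num.Theory numFieldNormedType.Exports.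
Set Implicit Arguments. Unset Strict Implicit. Unset Printing Implicit Defensive.
Local Open Scope classical_set_scope.
Local Open Scope ring_scope.

Lemma sum_expr_root_unity_eq0 (F : idomainType) (z : F) (n : nat) :
  z ^+ n = 1 -> z != 1 -> \sum_(i < n) z ^+ i = 0.
Proof.
move=> zn1 z_neq1; apply/eqP.
have := subrX1 z n; rewrite zn1 subrr => /esym/eqP.
by rewrite mulf_eq0 subr_eq0 (negbTE z_neq1).
Qed.

Section Characters.
Variable R : realType.

Definition expi (x : R) : R[i] := (cos x +i* sin x)%C.

Lemma expiD (x y : R) : expi (x + y) = expi x * expi y.
Proof. by rewrite /expi cosD sinD [RHS]/GRing.mul /=; congr Complex; ring. Qed.

Lemma expi0 : expi 0 = 1.
Proof. by rewrite /expi cos0 sin0. Qed.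

Lemma expi_sum (I : finType) (F : I -> R) : expi (\sum_i F i) = \prod_i expi (F i).
Proof. exact: (big_morph _ expiD expi0). Qed.

Lemma expiMn (x : R) (n : nat) : expi x ^+ n = expi (x *+ n).
Proof. by elim: n => [|n IHn]; rewrite ?expi0 // exprS IHn mulrS expiD. Qed.

Lemma expi_2pin (n : nat) : expi (pi *+ 2 *+ n) = 1.
Proof. by rewrite -expiMn /expi cos2pi sin2pi expr1n. Qed.

Lemma expi_neq1 (x : R) : 0 < `|x| < pi *+ 2 -> expi x != 1.
Proof.
move=> /andP[x_gt0 x_lt2pi].
have sin_half_neq0 : sin (x / 2) != 0.
  wlog x_ge0 : x x_gt0 x_lt2pi / 0 <= x.
    move=> hwlog; have [/hwlog|x_lt0] := leP 0 x; first exact.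
    rewrite -[x]opprK mulNr sinN oppr_eq0.
    by apply: hwlog; rewrite ?normrN // oppr_ge0 ltW.
  rewrite ger0_norm // in x_gt0 x_lt2pi.
  by apply: lt0r_neq0; apply: sin_gt0_pi; apply/andP; split; lra.
apply/negP => /eqP[cos1 _].
have : cos (x / 2 + x / 2) = 1 by rewrite -splitr.
rewrite cosD -!expr2 cos2sin2 => h.
by move: sin_half_neq0; rewrite -sqrf_eq0 (_ : sin (x / 2) ^+ 2 = 0) ?eqxx //; lra.
Qed.

Lemma sum_complex (I : finType) (f g : I -> R) :
  \sum_i ((f i +i* g i)%C : R[i]) = ((\sum_i f i) +i* (\sum_i g i))%C.
Proof. by elim/big_rec3: _ => [//|i x y z _ ->]. Qed.

End Characters.

Section Momenta.
Variable R : realType.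
Variable L : nat.
Hypothesis L_gt0 : (0 < L)%N.

Definition momentum (s : nat) : R := - pi + pi / L%:R * s.+1%:R.

Let L_neq0 : (L%:R : R) != 0. Proof. by rewrite pnatr_eq0 -lt0n. Qed.
Let pi_div_L_gt0 : 0 < pi / L%:R :> R. Proof. by rewrite divr_gt0 ?pi_gt0 ?ltr0n. Qed.
Let two_pi_E : pi *+ 2 = pi / L%:R * (2 * L)%:R :> R. Proof. by field. Qed.

(* A geometric progression whose ratio e^{i pi (b - a) / L} is a 2L-th root of unity,
   nontrivial unless a = b. *)
Lemma sum_expi_momentum (a b : 'I_(2 * L)) :
  \sum_(s < 2 * L) expi (momentum s * (b%:R - a%:R)) = (a == b)%:R * (2 * L)%:R.
Proof.
have [<-|a_neq_b] := eqVneq a b.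
  under eq_bigr do rewrite subrr mulr0 expi0.
  by rewrite sumr_const card_ord mul1r.
set v : R := b%:R - a%:R; set z := expi (pi / L%:R * v).
have expi_momentum s : expi (momentum s * v) = expi (momentum 0 * v) * z ^+ s.
  by rewrite expiMn -expiD /momentum -mulr_natr -addn1 natrD; congr expi; ring.
under eq_bigr do rewrite expi_momentum.
rewrite -mulr_sumr sum_expr_root_unity_eq0 ?mulr0 ?mul0r //.
  have period : pi / L%:R * v *+ (2 * L) + pi *+ 2 *+ a = pi *+ 2 *+ b.
    by rewrite /v; field.
  by rewrite expiMn; have := congr1 (@expi R) period; rewrite expiD !expi_2pin mulr1.
apply: expi_neq1.
have a_lt : (a%:R : R) < (2 * L)%:R by rewrite ltr_nat.
have b_lt : (b%:R : R) < (2 * L)%:R by rewrite ltr_nat.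
have v_neq0 : v != 0 by rewrite subr_eq0 eqr_nat eq_sym.
have v_lt : `|v| < (2 * L)%:R.
  have := ler0n R a; have := ler0n R b.
  by rewrite ltr_norml /v => b_ge0 a_ge0; apply/andP; split; lra.
rewrite normrM gtr0_norm // pmulr_rgt0 ?normr_gt0 //=.
by rewrite v_neq0 two_pi_E ltr_pM2l.
Qed.

Lemma momentum_in_cube (s : 'I_(2 * L)) : - pi < momentum s <= pi.
Proof.
have shift_gt0 : 0 < pi / L%:R * s.+1%:R :> R by rewrite mulr_gt0 ?ltr0n.
have shift_le : pi / L%:R * s.+1%:R <= pi *+ 2 :> R.
  by rewrite two_pi_E ler_pM2l // ler_nat.
rewrite /momentum; apply/andP; split; lra.
Qed.

Variable d : nat.
Local Notation site := (site d L).

Lemma pvecE (k : site) (j : 'I_d) : pvec R k 0 j = momentum (k j).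
Proof. by rewrite mxE. Qed.

Lemma sum_expi_pdot (l1 l2 : site) :
  \sum_(k : site) expi (pdot (pvec R k) l1 l2) = (l1 == l2)%:R * ((2 * L) ^ d)%:R.
Proof.
transitivity (\sum_(k : site) \prod_j expi (momentum (k j) * ((l2 j)%:R - (l1 j)%:R))).
  by apply: eq_bigr => k _; rewrite expi_sum; apply: eq_bigr => j _; rewrite pvecE.
rewrite -(bigA_distr_bigA (fun j (s : 'I_(2 * L)) =>
  expi (momentum s * ((l2 j)%:R - (l1 j)%:R)))) /=.
under eq_bigr do rewrite sum_expi_momentum.
have [<-|l1_neq_l2] := eqVneq l1 l2.
  under eq_bigr do rewrite eqxx mul1r.
  by rewrite prodr_const card_ord natrX mul1r.
have [j l1j_neq_l2j] : exists j, l1 j != l2 j.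
  apply/existsP; rewrite -negb_forall; apply: contra l1_neq_l2 => /forallP eq_l12.
  by apply/eqP/ffunP => j; apply/eqP/eq_l12.
by rewrite (bigD1 j) //= (negbTE l1j_neq_l2j) !mul0r.
Qed.

Lemma sum_cos_sin_pdot (l1 l2 : site) :
  \sum_(k : site) cos (pdot (pvec R k) l1 l2) = (l1 == l2)%:R * ((2 * L) ^ d)%:R /\
  \sum_(k : site) sin (pdot (pvec R k) l1 l2) = 0.
Proof.
have := sum_expi_pdot l1 l2; rewrite /expi sum_complex.
have -> : (l1 == l2)%:R * ((2 * L) ^ d)%:R =
          (((l1 == l2)%:R * ((2 * L) ^ d)%:R : R) +i* 0)%C.
  by rewrite complexr0 rmorphM !rmorph_nat.
by case=> -> ->.
Qed.

Lemma pdotB (p : 'rV[R]_d) (l l1 l2 : site) :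
  pdot p l l2 - pdot p l l1 = pdot p l1 l2.
Proof. by rewrite /pdot -sumrB; apply: eq_bigr => j _; ring. Qed.

Lemma pdot_antisym (p : 'rV[R]_d) (l1 l2 : site) : pdot p l1 l2 = - pdot p l2 l1.
Proof. by rewrite /pdot -sumrN; apply: eq_bigr => j _; ring. Qed.

Lemma pdotxx (p : 'rV[R]_d) (l : site) : pdot p l l = 0.
Proof. by rewrite /pdot big1 // => j _; rewrite subrr mulr0. Qed.

Lemma pdot0 (l1 l2 : site) : pdot (0 : 'rV[R]_d) l1 l2 = 0.
Proof. by rewrite /pdot big1 // => j _; rewrite mxE mul0r. Qed.

Lemma fourier_inversion (D : site -> site -> R) (l l' : site) :
  \sum_(k : site) DhatRe D (pvec R k) l * cos (pdot (pvec R k) l l')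
  + \sum_(k : site) DhatIm D (pvec R k) l * sin (pdot (pvec R k) l l')
  = ((2 * L) ^ d)%:R * D l l'.
Proof.
rewrite -big_split /=.
transitivity (\sum_(k : site) \sum_(m : site) D l m * cos (pdot (pvec R k) l' m)).
  apply: eq_bigr => k _; rewrite !mulr_suml -big_split; apply: eq_bigr => m _ /=.
  by rewrite -(pdotB _ l l' m) cosB; ring.
rewrite exchange_big /=.
under eq_bigr do rewrite -mulr_sumr (sum_cos_sin_pdot _ _).1.
rewrite (bigD1 l') //= eqxx big1 => [|m m_neq]; first by rewrite addr0 mul1r mulrC.
by rewrite eq_sym (negbTE m_neq) mul0r mulr0.
Qed.

Lemma fourier_inversion_real (D : site -> site -> R) (l l' : site) :
  (forall k : site, pvec R k != 0 -> DhatIm D (pvec R k) l = 0) ->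
  ((2 * L) ^ d)%:R * D l l' =
  \sum_(k : site) DhatRe D (pvec R k) l * cos (pdot (pvec R k) l l').
Proof.
move=> Dhat_real; rewrite -fourier_inversion [X in _ + X]big1 ?addr0 // => k _.
have [->|p_neq0] := eqVneq (pvec R k) 0; first by rewrite pdot0 sin0 mulr0.
by rewrite Dhat_real ?mul0r.
Qed.

Lemma diag_sub_offdiag_le (D : site -> site -> R) (b : site -> R) (l l' : site) :
  (forall k : site, pvec R k != 0 -> DhatRe D (pvec R k) l <= b k /\ DhatIm D (pvec R k) l = 0) ->
  ((2 * L) ^ d)%:R * (D l l - D l l') <=
  \sum_(k : site | pvec R k != 0) b k * (1 - cos (pdot (pvec R k) l l')).
Proof.
move=> Dhat_le.
have Dhat_real k (p_neq0 : pvec R k != 0) := (Dhat_le k p_neq0).2.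
rewrite mulrBr !fourier_inversion_real // -sumrB (bigID (fun k => pvec R k != 0)) /=.
rewrite [X in _ + X]big1 ?addr0 => [|k /negbNE/eqP ->]; last by rewrite !pdot0 subrr.
apply: ler_sum => k p_neq0; rewrite pdotxx cos0 -mulrBr.
by rewrite ler_wpM2r ?subr_ge0 ?cos_le1 ?(Dhat_le k p_neq0).1.
Qed.

Lemma BL_diag_pinfty (Bh : 'rV[R]_d -> \bar R) (l k0 : site) :
  (forall k : site, pvec R k != 0 -> (0 <= Bh (pvec R k))%E) ->
  pvec R k0 != 0 -> Bh (pvec R k0) = +oo%E -> BL Bh l l = +oo%E.
Proof.
move=> Bh_ge0 p0_neq0 Bh_k0; rewrite /BL.
under eq_bigr do rewrite pdotxx cos0 mule1.
rewrite (bigD1 k0) //= Bh_k0 addye; last first.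
  rewrite gt_eqF // (@lt_le_trans _ _ 0%E) //.
  by apply: sume_ge0 => k /andP[/Bh_ge0].
by rewrite muleC gt0_mulye // lte_fin invr_gt0 exprn_gt0 // ltr0n muln_gt0.
Qed.

Lemma BL_EFin (Bh : 'rV[R]_d -> \bar R) (b : site -> R) (l l' : site) :
  (forall k : site, pvec R k != 0 -> Bh (pvec R k) = (b k)%:E) ->
  BL Bh l l' = (((2 * L) ^ d)%:R^-1 *
    \sum_(k : site | pvec R k != 0) b k * cos (pdot (pvec R k) l' l))%:E.
Proof.
move=> Bh_fin; rewrite /BL natrX; under eq_bigr => k p_neq0 do rewrite Bh_fin // -EFinM.
by rewrite sumEFin -EFinM.
Qed.

Lemma offdiag_ge_of_Dhat_le (D : site -> site -> R) (Bh : 'rV[R]_d -> \bar R) :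
  (forall k : site, pvec R k != 0 -> (0 <= Bh (pvec R k))%E) ->
  (forall k : site, pvec R k != 0 -> forall l,
     ((DhatRe D (pvec R k) l)%:E <= Bh (pvec R k))%E /\ DhatIm D (pvec R k) l = 0) ->
  forall l l', ((D l l)%:E - BL Bh l l + BL Bh l l' <= (D l l')%:E)%E.
Proof.
move=> Bh_ge0 Dhat_le l l'.
have [[k0 [p0_neq0 Bh_k0]]|no_pinfty] :=
    pselect (exists k : site, pvec R k != 0 /\ Bh (pvec R k) = +oo%E).
  by rewrite (BL_diag_pinfty _ Bh_ge0 p0_neq0 Bh_k0) addeNy addNye leNye.
pose b (k : site) := fine (Bh (pvec R k)).
have Bh_fin k : pvec R k != 0 -> Bh (pvec R k) = (b k)%:E.
  move=> p_neq0; rewrite /b fineK // ge0_fin_numE ?Bh_ge0 // ltey.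
  by apply/eqP => Bh_k; apply: no_pinfty; exists k.
rewrite !(BL_EFin _ _ Bh_fin) -EFinB -EFinD lee_fin.
set N : R := ((2 * L) ^ d)%:R.
have N_gt0 : 0 < N by rewrite ltr0n expn_gt0 muln_gt0 L_gt0.
have Dhat_le_b k (p_neq0 : pvec R k != 0) :
    DhatRe D (pvec R k) l <= b k /\ DhatIm D (pvec R k) l = 0.
  by have [Dhat_le_Bh Dhat_real] := Dhat_le k p_neq0 l; rewrite -lee_fin -Bh_fin.
have BL_diff :
    \sum_(k : site | pvec R k != 0) b k * cos (pdot (pvec R k) l l)
  - \sum_(k : site | pvec R k != 0) b k * cos (pdot (pvec R k) l' l)
  = \sum_(k : site | pvec R k != 0) b k * (1 - cos (pdot (pvec R k) l l')).
  by rewrite -sumrB; apply: eq_bigr => k _; rewrite pdotxx cos0 (pdot_antisym _ l' l) cosN; ring.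
have := diag_sub_offdiag_le l' Dhat_le_b.
rewrite -BL_diff -ler_pdivlMl // mulrBr; lra.
Qed.

End Momenta.

Theorem lemma3p1 (R : realType) (d nu : nat) (m a beta : R)
  (phi : {ffun 'I_d -> nat} -> R) (V : 'rV[R]_nu -> R) (AV BV r : R)
  (dO : measure_display) (O : measurableType dO) (P : probability O R)
  (X : forall L : nat, O -> site d L -> R -> 'rV[R]_nu)
  (Bh : 'rV[R]_d -> \bar R) :
  (0 < d)%N -> (0 < nu)%N -> 0 < m -> 0 < a -> 0 < beta ->
  (* interaction *)
  phi [ffun => 0%N] = 0 -> (forall n, 0 <= phi n) ->
  (\esum_(n in [set: {ffun 'I_d -> nat}]) (phi n)%:E < +oo)%E ->
  (* anharmonic potential *)
  continuous V ->
  (forall U : 'M[R]_nu, U *m U^T = 1%:M -> forall x, V (x *m U) = V x) ->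
  1 < r -> 0 < AV -> (forall x, AV * powR (dotv x x) r + BV <= V x) ->
  (* for each box Lambda_L, X L is distributed according to chi_Lambda *)
  (forall L, (0 < L)%N -> is_chi_process beta m a P (X L)) ->
  (* hat B *)
  (forall p, cube p -> (0 < Bh p)%E) ->
  {within (@cube R d), continuous Bh} ->
  (cube_int d (fun q => Bh (\row_j q j)) < +oo)%E ->
  (forall L, (0 < L)%N -> forall k : site d L, pvec R k != 0 ->
     forall l : site d L,
       ((DhatRe (DL beta phi V P (X L)) (pvec R k) l)%:E <= Bh (pvec R k))%E /\
       DhatIm (DL beta phi V P (X L)) (pvec R k) l = 0) ->
  forall L, (0 < L)%N -> forall l l' : site d L,
    (((DL beta phi V P (X L) l l)%:E - BL Bh l l) + BL Bh l l'
      <= (DL beta phi V P (X L) l l')%:E)%E.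
Proof.
move=> _ _ _ _ _ _ _ _ _ _ _ _ _ _ Bh_gt0 _ _ Dhat_le L L_gt0.
apply: (offdiag_ge_of_Dhat_le L_gt0 _ (Dhat_le L L_gt0)) => k _.
by apply/ltW/Bh_gt0 => j; rewrite pvecE momentum_in_cube.
Qed.
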